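(* The semirings $\mathbb{R}_{\min}$ and $\mathbb{R}_{\max}$ are fully elementary. Their symmetrizations $\tilde{\mathcal{S}}(\mathbb{R}_{\min})$ and $\tilde{\mathcal{S}}(\mathbb{R}_{\max})$ are not fully elementary.
   Context: $\mathbb{R}_{\min}=\mathbb{R}\cup\{+\infty\}$ with addition $\min$ (zero $+\infty$) and multiplication the usual $+$ (unit $0$); $\mathbb{R}_{\max}=\mathbb{R}\cup\{-\infty\}$ with addition $\max$ and multiplication $+$. For a semiring $X$, $\mathcal{S}(X)=X\times X$ with $(a',a'')+(b',b'')=(a'+b',a''+b'')$ and $(a',a'')\cdot(b',b'')=(a'b'+a''b'',a'b''+a''b')$. The relation $\sim$ on $\mathcal{S}(X)$ is: $(a',a'')\sim(b',b'')$ iff $(a',a'')=(b',b'')$, or ($a'\ne a''$, $b'\ne b''$ and $a'+b''=a''+b'$). When $\sim$ is a congruence, the symmetrization is the quotient semiring $\tilde{\mathcal{S}}(X)=\mathcal{S}(X)/\sim$. Polynomials over a unital commutative semiring $X$ in $n$ variables are functions $X^n\to X$ represented by formal expressions $\sum_k a_k\prod_j x_j^{d_{k,j}}$; a polynomial is symmetric if represented by an expression closed (with coefficients) under permuting variables. $e_j$ is the sum of all products of $j$ distinct variables. $X$ is fully elementary if for every $n$ every symmetric polynomial $p$ in $n$ variables equals $r(e_1,\dots,e_n)$ as functions on $X^n$ for some polynomial $r$. *)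

From Stdlib Require Import Reals ClassicalEpsilon.
From mathcomp Require Import all_boot perm.

Set Implicit Arguments.
Unset Strict Implicit.
Unset Printing Implicit Defensive.

Record srops := SROps {
  car :> Type;
  sadd : car -> car -> car;
  smul : car -> car -> car;
  szero : car;
  sone : car }.

(* R_min = R u {+oo} (None = +oo), addition min, multiplication + *)
Definition rmin_add (a b : option R) : option R :=
  match a, b with
  | None, _ => b
  | _, None => a
  | Some x, Some y => Some (Rmin x y)
  end.
Definition ext_plus (a b : option R) : option R :=
  match a, b with
  | Some x, Some y => Some (Rplus x y)
  | _, _ => None
  end.
Definition Rmin_sr : srops := SROps rmin_add ext_plus None (Some R0).

(* R_max = R u {-oo} (None = -oo), addition max, multiplication + *)
Definition rmax_add (a b : option R) : option R :=
  match a, b with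
  | None, _ => b
  | _, None => a
  | Some x, Some y => Some (Rmax x y)
  end.
Definition Rmax_sr : srops := SROps rmax_add ext_plus None (Some R0).

Definition sym_add (X : srops) (a b : X * X) : X * X :=
  (sadd a.1 b.1, sadd a.2 b.2).
Definition sym_mul (X : srops) (a b : X * X) : X * X :=
  (sadd (smul a.1 b.1) (smul a.2 b.2), sadd (smul a.1 b.2) (smul a.2 b.1)).
Definition S_sr (X : srops) : srops :=
  SROps (@sym_add X) (@sym_mul X) (szero X, szero X) (sone X, szero X).

Definition sim (X : srops) (a b : X * X) : Prop :=
  a = b \/ (a.1 <> a.2 /\ b.1 <> b.2 /\ sadd a.1 b.2 = sadd a.2 b.1).

Definition quot (T : Type) (Rel : T -> T -> Prop) : Type :=
  {C : T -> Prop | exists x, C = Rel x}.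
Definition cls (T : Type) (Rel : T -> T -> Prop) (x : T) : quot Rel :=
  exist _ (Rel x) (ex_intro _ x erefl).
Definition rep (T : Type) (Rel : T -> T -> Prop) (C : quot Rel) : T :=
  proj1_sig (constructive_indefinite_description _ (proj2_sig C)).

(* quotient semiring S(X)/~ (operations computed on representatives;
   this is the quotient semiring when ~ is a congruence) *)
Definition Stilde (X : srops) : srops :=
  @SROps (quot (@sim X))
    (fun C D => cls (@sim X) (sym_add (rep C) (rep D)))
    (fun C D => cls (@sim X) (sym_mul (rep C) (rep D)))
    (cls (@sim X) (szero X, szero X))
    (cls (@sim X) (sone X, szero X)).

(* formal polynomial expressions in n variables: lists of terms
   (a_k, d_k) representing sum_k a_k prod_j x_j^(d_k j) *)
Definition pexpr (X : srops) (n : nat) := seq (X * {ffun 'I_n -> nat}).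

Definition spow (X : srops) (x : X) (k : nat) : X := iter k (smul x) (sone X).

Definition meval (X : srops) (n : nat) (d : {ffun 'I_n -> nat}) (x : 'I_n -> X) : X :=
  foldr (fun i acc => smul (spow (x i) (d i)) acc) (sone X) (enum 'I_n).

Definition peval (X : srops) (n : nat) (p : pexpr X n) (x : 'I_n -> X) : X :=
  foldr (fun t acc => sadd (smul t.1 (meval t.2 x)) acc) (szero X) p.

Definition sym_expr (X : srops) (n : nat) (p : pexpr X n) : Prop :=
  forall (t : X * {ffun 'I_n -> nat}) (s : {perm 'I_n}),
    List.In t p -> List.In (t.1, [ffun i => t.2 (s i)]) p.

Definition esym_expr (X : srops) (n j : nat) : pexpr X n :=
  [seq (sone X, [ffun i => nat_of_bool (i \in A)]) | A : {set 'I_n} <- enum [set A : {set 'I_n} | #|A| == j]].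

Definition fully_elementary (X : srops) : Prop :=
  forall (n : nat) (p : pexpr X n), sym_expr p ->
    exists r : pexpr X n, forall x : 'I_n -> X,
      peval p x = peval r (fun i : 'I_n => peval (esym_expr X n i.+1) x).

(* In R_min a monomial x^d is the sum of the d_j x_j. Cutting d into the layers
   L_t = {j | t < d_j}, it is the sum over t of the sums of x_j over L_t, and each of
   these is at least e_|L_t|(x), the sum of the |L_t| smallest coordinates, with
   equality for every t when the exponents are arranged in the order opposite to the
   coordinates. So replacing each term a x^d of a symmetric p by a prod_k e_k^(c_k),
   where c_k is the number of layers of size k, does not change the function: each new
   term lies below the old one and is attained by a permuted copy of it, which p
   contains. Negation turns R_max into R_min.

   The symmetrizations of R_min and (through negation) of R_max map homomorphically
   onto the normal forms of S(R_min). There x^2 + y^2 takes the values 1, 1*, 1 at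
   (1, 0), (1*, 0), (1, -1), where 1* = (0, 0) is the balanced unit, while (e_1, e_2)
   takes the values (1, 0), (1*, 0), (1*, -1). If r(e_1, e_2) = x^2 + y^2, the value
   1* at (1*, 0) needs a term of r whose negative part has valuation at most 0 there;
   that term takes the same value at (1, 0) or at (1*, -1), where r must be 1, whose
   negative part is +oo. *)

From HB Require Import structures.
From Stdlib Require Import Reals ClassicalEpsilon FunctionalExtensionality Lra.
From mathcomp Require Import all_boot perm.

Set Implicit Arguments.
Unset Strict Implicit.
Unset Printing Implicit Defensive.

Lemma In_mem (T : eqType) (x : T) (s : seq T) : List.In x s <-> x \in s.
Proof.
elim: s => [|y s IH] //=; rewrite in_cons; split.
- by case=> [->|/IH ->]; rewrite ?eqxx ?orbT.
- by case/orP=> [/eqP->|/IH]; [left|right].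
Qed.

Lemma foldr_perm (T : eqType) (A : Type) (f : T -> A -> A) (z : A) :
  (forall a b c, f a (f b c) = f b (f a c)) ->
  forall s1 s2, perm_eq s1 s2 -> foldr f z s1 = foldr f z s2.
Proof.
move=> fC.
have foldr_rem x s : x \in s -> foldr f z s = f x (foldr f z (rem x s)).
  elim: s => [|y s IH] //=; rewrite in_cons.
  case: (eqVneq y x) => [-> //|nyx] /= /IH ->.
  by rewrite fC.
elim=> [|x s1 IH] s2 s12; first by move: (perm_size s12) => /= /esym /size0nil ->.
have x_s2 : x \in s2 by rewrite -(perm_mem s12) mem_head.
rewrite (foldr_rem x s2 x_s2) /= (IH (rem x s2)) //.
by rewrite -(perm_cons x) (perm_trans s12) // perm_to_rem.
Qed.

Section SemiringMorphism.

Variables (X Y : srops) (h : X -> Y).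
Hypotheses (h_add : forall a b, h (sadd a b) = sadd (h a) (h b))
  (h_mul : forall a b, h (smul a b) = smul (h a) (h b))
  (h_zero : h (szero X) = szero Y) (h_one : h (sone X) = sone Y).

Definition map_pexpr n (p : pexpr X n) : pexpr Y n := [seq (h t.1, t.2) | t <- p].

Lemma spow_morph x k : h (spow x k) = spow (h x) k.
Proof. by elim: k => [|k IH] //=; rewrite h_mul IH. Qed.

Lemma meval_morph n d (x : 'I_n -> X) : h (meval d x) = meval d (h \o x).
Proof.
by rewrite /meval; elim: (enum 'I_n) => [|i s IH] //=; rewrite h_mul IH spow_morph.
Qed.

Lemma peval_morph n (p : pexpr X n) x : h (peval p x) = peval (map_pexpr p) (h \o x).
Proof.
by rewrite /peval; elim: p => [|t p IH] //=; rewrite h_add h_mul IH meval_morph.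
Qed.

Lemma map_pexpr_esym n j : map_pexpr (esym_expr X n j) = esym_expr Y n j.
Proof. by rewrite /map_pexpr -map_comp; apply: eq_map => A /=; rewrite h_one. Qed.

Lemma map_pexpr_sym n (p : pexpr X n) : sym_expr p -> sym_expr (map_pexpr p).
Proof.
move=> p_sym t s /List.in_map_iff [u [<- pu]].
exact: (List.in_map (fun t => (h t.1, t.2)) p (u.1, [ffun i => u.2 (s i)]) (p_sym u s pu)).
Qed.

Lemma peval_esym_morph n (p : pexpr X n) x :
  h (peval p (fun i : 'I_n => peval (esym_expr X n i.+1) x)) =
  peval (map_pexpr p) (fun i : 'I_n => peval (esym_expr Y n i.+1) (h \o x)).
Proof.
rewrite peval_morph; congr peval; apply: functional_extensionality => i /=.
by rewrite peval_morph map_pexpr_esym.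
Qed.

End SemiringMorphism.

Lemma fully_elementary_retract (X Y : srops) (f : X -> Y) (g : Y -> X) :
  (forall a b, f (sadd a b) = sadd (f a) (f b)) ->
  (forall a b, f (smul a b) = smul (f a) (f b)) ->
  f (szero X) = szero Y -> f (sone X) = sone Y ->
  (forall a b, g (sadd a b) = sadd (g a) (g b)) ->
  (forall a b, g (smul a b) = smul (g a) (g b)) ->
  g (szero Y) = szero X -> g (sone Y) = sone X ->
  cancel g f -> fully_elementary X -> fully_elementary Y.
Proof.
move=> f_add f_mul f_zero f_one g_add g_mul g_zero g_one gK X_fe n p p_sym.
have [r Hr] := X_fe n _ (map_pexpr_sym (h := g) p_sym).
exists (map_pexpr f r) => x.
rewrite -[LHS]gK peval_morph // Hr peval_esym_morph //.
by have -> : f \o (g \o x) = x by apply: functional_extensionality => i; exact: gK.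
Qed.

(** * R_min and R_max are fully elementary *)

Definition ole (a b : option R) : bool :=
  match a, b with
  | _, None => true
  | None, Some _ => false
  | Some x, Some y => if Rle_dec x y then true else false
  end.

Ltac Rle_cases := repeat (case: Rle_dec => /= ?); try done; exfalso; lra.

Lemma ole_refl a : ole a a.
Proof. by case: a => [a|] //=; Rle_cases. Qed.

Lemma ole_trans a b c : ole a b -> ole b c -> ole a c.
Proof. by case: a => [a|]; case: b => [b|]; case: c => [c|] //=; Rle_cases. Qed.

Lemma ole_total a b : ole a b || ole b a.
Proof. by case: a => [a|]; case: b => [b|] //=; Rle_cases. Qed.

Lemma ole_anti a b : ole a b -> ole b a -> a = b.
Proof.
case: a => [a|]; case: b => [b|] //=.
by case: (Rle_dec a b) => ? //; case: (Rle_dec b a) => ? // _ _; congr Some; lra.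
Qed.

Lemma ole_plus a b c d : ole a b -> ole c d -> ole (ext_plus a c) (ext_plus b d).
Proof.
by case: a => [a|]; case: b => [b|]; case: c => [c|]; case: d => [d|] //=; Rle_cases.
Qed.

Lemma rmin_lel a b : ole (rmin_add a b) a.
Proof. by case: a => [a|]; case: b => [b|] //=; rewrite /Rmin; Rle_cases. Qed.

Lemma rmin_ler a b : ole (rmin_add a b) b.
Proof. by case: a => [a|]; case: b => [b|] //=; rewrite /Rmin; Rle_cases. Qed.

Lemma ole_rmin c a b : ole c a -> ole c b -> ole c (rmin_add a b).
Proof.
by case: a => [a|]; case: b => [b|]; case: c => [c|] //=; rewrite /Rmin; Rle_cases.
Qed.

Lemma rmin_ole a b c : ole (rmin_add a b) c = ole a c || ole b c.
Proof.
by case: a => [a|]; case: b => [b|]; case: c => [c|] //=; rewrite /Rmin; Rle_cases.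
Qed.

Lemma ext_plusA : associative ext_plus.
Proof. by case=> [a|]; case=> [b|]; case=> [c|] //=; rewrite Rplus_assoc. Qed.

Lemma ext_plusC : commutative ext_plus.
Proof. by case=> [a|]; case=> [b|] //=; rewrite Rplus_comm. Qed.

Lemma ext_plus0 : left_id (Some R0) ext_plus.
Proof. by case=> [a|] //=; rewrite Rplus_0_l. Qed.

HB.instance Definition _ :=
  Monoid.isComLaw.Build (option R) (Some R0) ext_plus ext_plusA ext_plusC ext_plus0.

Lemma rmin_addA : associative rmin_add.
Proof.
move=> a b c; apply: ole_anti; repeat apply: ole_rmin;
  by [apply: rmin_lel | apply: rmin_ler
     | apply: ole_trans (rmin_ler _ _) _; first [apply: rmin_lel | apply: rmin_ler]
     | apply: ole_trans (rmin_lel _ _) _; first [apply: rmin_lel | apply: rmin_ler]].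
Qed.

Lemma rmin_addC : commutative rmin_add.
Proof. by move=> a b; apply: ole_anti; apply: ole_rmin; apply: rmin_lel || apply: rmin_ler. Qed.

Lemma rmin_add0 : left_id None rmin_add.
Proof. by case. Qed.

HB.instance Definition _ :=
  Monoid.isComLaw.Build (option R) None rmin_add rmin_addA rmin_addC rmin_add0.

Lemma foldr_rmin_le (T : Type) (F : T -> option R) s t :
  List.In t s -> ole (foldr (fun t acc => rmin_add (F t) acc) None s) (F t).
Proof.
elim: s => [|u s IH] //= [->|/IH]; first exact: rmin_lel.
exact: ole_trans (rmin_ler _ _).
Qed.

Lemma ole_foldr_rmin (T : Type) (F : T -> option R) s c :
  (forall t, List.In t s -> ole c (F t)) ->
  ole c (foldr (fun t acc => rmin_add (F t) acc) None s).
Proof.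
elim: s => [|u s IH] /= cF; first by case: c {cF}.
by apply: ole_rmin; [apply: cF; left | apply: IH => t st; apply: cF; right].
Qed.

Lemma foldr_rmin_ole (T : Type) (F : T -> option R) s (c : R) :
  ole (foldr (fun t acc => rmin_add (F t) acc) None s) (Some c) ->
  exists2 t, List.In t s & ole (F t) (Some c).
Proof.
elim: s => [|u s IH] //=.
rewrite rmin_ole => /orP [Fu | /IH [t st Ft]]; first by exists u; [left|].
by exists t; [right|].
Qed.

Lemma ole_big (I : finType) (P : pred I) (F G : I -> option R) :
  (forall i, P i -> ole (F i) (G i)) ->
  ole (\big[ext_plus/Some R0]_(i | P i) F i) (\big[ext_plus/Some R0]_(i | P i) G i).
Proof.
move=> FG; apply: (big_ind2 ole) => //; [exact: ole_refl | exact: ole_plus].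
Qed.

Lemma ole_bigmin (I : finType) (P : pred I) (F : I -> option R) c :
  (forall i, P i -> ole c (F i)) -> ole c (\big[rmin_add/None]_(i | P i) F i).
Proof.
move=> cF; apply: (big_ind (ole c)) => //; [by case: c {cF} | exact: ole_rmin].
Qed.

Lemma bigmin_le (I : finType) (P : pred I) (F : I -> option R) i :
  P i -> ole (\big[rmin_add/None]_(j | P j) F j) (F i).
Proof. by move=> Pi; rewrite (bigD1 i) //=; apply: rmin_lel. Qed.

Section RminLayers.

Variable n : nat.
Implicit Types (d : {ffun 'I_n -> nat}) (x : 'I_n -> option R) (A S : {set 'I_n}).

Definition indicator A : {ffun 'I_n -> nat} := [ffun i => nat_of_bool (i \in A)].

Definition layer d t : {set 'I_n} := [set j | t < d j].

Definition total_degree d := \sum_(j < n) d j.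

Definition esym_exponent d : {ffun 'I_n -> nat} :=
  [ffun k : 'I_n => #|[set t : 'I_(total_degree d) | #|layer d t| == k.+1]|].

Definition esym_values x : 'I_n -> option R :=
  fun k => @peval Rmin_sr n (esym_expr Rmin_sr n k.+1) x.

Lemma meval_Rmin d x :
  @meval Rmin_sr n d x = \big[ext_plus/Some R0]_(i < n) @spow Rmin_sr (x i) (d i).
Proof.
rewrite /meval -big_enum /=; elim: (enum 'I_n) => [|i s IH]; first by rewrite big_nil.
by rewrite big_cons -IH.
Qed.

Lemma meval_indicator A x :
  @meval Rmin_sr n (indicator A) x = \big[ext_plus/Some R0]_(j in A) x j.
Proof.
rewrite meval_Rmin [RHS]big_mkcond; apply: eq_bigr => j _.
by rewrite ffunE; case: (j \in A) => //=; rewrite Monoid.mulm1.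
Qed.

Lemma meval_layers d x M : (forall j, d j <= M) ->
  @meval Rmin_sr n d x =
  \big[ext_plus/Some R0]_(t < M) \big[ext_plus/Some R0]_(j | t < d j) x j.
Proof.
move=> dM; rewrite meval_Rmin.
rewrite (eq_bigr (fun j => \big[ext_plus/Some R0]_(t < M | t < d j) x j)).
  exact: (exchange_big_dep predT).
move=> j _; rewrite -(big_mkord (fun t => t < d j) (fun=> x j)).
by rewrite -(big_nat_widen _ _ _ predT) // big_const_nat subn0.
Qed.

Lemma layer_le_total_degree d j : d j <= total_degree d.
Proof. by rewrite /total_degree (bigD1 j) //= leq_addr. Qed.

Lemma meval_esym_exponent d x :
  @meval Rmin_sr n (esym_exponent d) (esym_values x) =
  \big[ext_plus/Some R0]_(t < total_degree d)
    \big[ext_plus/Some R0]_(k : 'I_n | #|layer d t| == k.+1) esym_values x k.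
Proof.
rewrite meval_Rmin.
rewrite (eq_bigr (fun k : 'I_n =>
  \big[ext_plus/Some R0]_(t < total_degree d | #|layer d t| == k.+1) esym_values x k)).
  exact: (exchange_big_dep predT).
move=> k _; rewrite ffunE -[LHS]/(iter _ (ext_plus _) _) -big_const.
by apply: eq_bigl => t; rewrite inE.
Qed.

Lemma peval_esym_Rmin k x :
  @peval Rmin_sr n (esym_expr Rmin_sr n k) x =
  foldr (fun A acc => rmin_add (\big[ext_plus/Some R0]_(j in A) x j) acc) None
    (enum [set A : {set 'I_n} | #|A| == k]).
Proof.
rewrite /peval /esym_expr foldr_map.
elim: (enum _) => [|A s IH] //=.
by rewrite IH -(meval_indicator A x); congr rmin_add; apply: ext_plus0.
Qed.

Lemma esym_le_sum A x :
  ole (@peval Rmin_sr n (esym_expr Rmin_sr n #|A|) x) (\big[ext_plus/Some R0]_(j in A) x j).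
Proof.
rewrite peval_esym_Rmin; apply: foldr_rmin_le.
by apply/In_mem; rewrite mem_enum inE.
Qed.

Lemma le_esym k x c :
  (forall A, #|A| = k -> ole c (\big[ext_plus/Some R0]_(j in A) x j)) ->
  ole c (@peval Rmin_sr n (esym_expr Rmin_sr n k) x).
Proof.
move=> cA; rewrite peval_esym_Rmin; apply: ole_foldr_rmin => A.
by move/In_mem; rewrite mem_enum inE => /eqP /cA.
Qed.

Lemma big_esym_values_card S x :
  \big[ext_plus/Some R0]_(k : 'I_n | #|S| == k.+1) esym_values x k =
  @peval Rmin_sr n (esym_expr Rmin_sr n #|S|) x.
Proof.
have := max_card S; rewrite card_ord.
case cS: #|S| => [|m] mn.
  rewrite big_pred0 // peval_esym_Rmin.
  have -> : [set A : {set 'I_n} | #|A| == 0] = [set set0].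
    by apply/setP => A; rewrite !inE cards_eq0.
  by rewrite enum_set1 /= big_set0.
by rewrite (big_pred1 (Ordinal mn)) // => k; rewrite eqSS -val_eqE.
Qed.

(* Each x_j with j in S :\: A is at most the minimum over A :\: S, a set of the same size. *)
Lemma sum_lowest_le S A x :
  (forall j j', j \in S -> j' \notin S -> ole (x j) (x j')) -> #|A| = #|S| ->
  ole (\big[ext_plus/Some R0]_(j in S) x j) (\big[ext_plus/Some R0]_(j in A) x j).
Proof.
move=> S_low cA.
rewrite (big_setID A) [X in ole _ X](big_setID S) setIC.
apply: ole_plus; first exact: ole_refl.
have cD : #|S :\: A| = #|A :\: S|.
  move/eqP: cA; rewrite -(cardsID A S) -(cardsID S A) setIC.
  by rewrite eqn_add2l => /eqP.
pose v := \big[rmin_add/None]_(j in A :\: S) x j.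
apply: (@ole_trans _ (\big[ext_plus/Some R0]_(j in S :\: A) v)).
  apply: ole_big => j; rewrite inE => /andP [_ Sj].
  by apply: ole_bigmin => j'; rewrite inE => /andP [S'j' _]; apply: S_low.
rewrite big_const cD -big_const.
by apply: ole_big => j Aj; apply: bigmin_le.
Qed.

Lemma meval_esym_exponent_le d x :
  ole (@meval Rmin_sr n (esym_exponent d) (esym_values x)) (@meval Rmin_sr n d x).
Proof.
rewrite meval_esym_exponent (meval_layers x (@layer_le_total_degree d)).
apply: ole_big => t _; rewrite big_esym_values_card.
have -> : \big[ext_plus/Some R0]_(j | t < d j) x j = \big[ext_plus/Some R0]_(j in layer d t) x j.
  by apply: eq_bigl => j; rewrite inE.
exact: esym_le_sum.
Qed.

Lemma meval_antitone_le_esym_exponent d x (s : {perm 'I_n}) :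
  (forall i j, ~~ ole (x j) (x i) -> d (s j) <= d (s i)) ->
  ole (@meval Rmin_sr n [ffun i => d (s i)] x)
      (@meval Rmin_sr n (esym_exponent d) (esym_values x)).
Proof.
move=> ds_anti; rewrite meval_esym_exponent (meval_layers x (M := total_degree d)); last first.
  by move=> j; rewrite ffunE layer_le_total_degree.
apply: ole_big => t _; rewrite big_esym_values_card.
pose S := [set j | t < d (s j)].
have -> : #|layer d t| = #|S|.
  have -> : S = s @^-1: layer d t by apply/setP => j; rewrite !inE.
  by rewrite card_preimset //; apply: perm_inj.
rewrite (eq_bigl (mem S)) => [|j]; last by rewrite !inE ffunE.
apply: le_esym => A /sum_lowest_le; apply => j j'; rewrite !inE => Sj S'j'.
apply: contraNT S'j' => /ds_anti.
exact: leq_trans Sj.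
Qed.

(* s maps the i-th smallest coordinate of x to the i-th largest exponent of d. *)
Lemma exists_antitone_perm x (d : 'I_n -> nat) :
  exists s : {perm 'I_n}, forall i j, ~~ ole (x j) (x i) -> d (s j) <= d (s i).
Proof.
pose lx i j := ole (x i) (x j).
pose ld i j := d j <= d i.
pose sx := sort lx (enum 'I_n).
pose sd := sort ld (enum 'I_n).
have size_sx : size sx = n by rewrite size_sort size_enum_ord.
have size_sd : size sd = n by rewrite size_sort size_enum_ord.
have sx_all j : j \in sx by rewrite mem_sort mem_enum.
have index_lt j : index j sx < n by have := index_mem j sx; rewrite sx_all size_sx.
have sd_uniq : uniq sd by rewrite sort_uniq enum_uniq.
pose f j := nth j sd (index j sx).
have f_inj : injective f.
  move=> j1 j2; rewrite /f (set_nth_default j1 j2) ?size_sd ?index_lt //.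
  move/eqP; rewrite nth_uniq ?size_sd ?index_lt // => /eqP.
  exact: index_inj.
exists (perm f_inj) => i j xij; rewrite !permE /f.
have lx_trans : transitive lx by move=> b a c; apply: ole_trans.
have ld_trans : transitive ld by move=> b a c ab bc; apply: leq_trans bc ab.
have index_ij : index i sx <= index j sx.
  rewrite leqNgt; apply: contra xij => ji.
  have := sorted_leq_nth lx_trans (fun a => ole_refl (x a)) i
    (sort_sorted (fun a b => ole_total (x a) (x b)) (enum 'I_n)).
  move=> /(_ (index j sx) (index i sx)); rewrite !inE size_sx !index_lt.
  by rewrite /lx !nth_index ?sx_all //; apply; rewrite // ltnW.
have := sorted_leq_nth ld_trans (fun a => leqnn (d a)) i
  (sort_sorted (fun a b => leq_total (d b) (d a)) (enum 'I_n)).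
move=> /(_ (index i sx) (index j sx)); rewrite !inE size_sd !index_lt.
by rewrite /ld (set_nth_default i j) ?size_sd ?index_lt //; apply.
Qed.

End RminLayers.

Theorem fully_elementary_Rmin : fully_elementary Rmin_sr.
Proof.
move=> n p p_sym; exists [seq (t.1, esym_exponent t.2) | t <- p] => x.
change (@peval Rmin_sr n p x =
  @peval Rmin_sr n [seq (t.1, esym_exponent t.2) | t <- p] (esym_values x)).
rewrite /peval foldr_map.
apply: ole_anti.
  apply: ole_foldr_rmin => t pt.
  have [s ds_anti] := exists_antitone_perm x t.2.
  apply: ole_trans (foldr_rmin_le _ (p_sym t s pt)) _.
  by apply: ole_plus; [apply: ole_refl | apply: meval_antitone_le_esym_exponent].
apply: ole_foldr_rmin => t pt; apply: ole_trans (foldr_rmin_le _ pt) _.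
by apply: ole_plus; [apply: ole_refl | apply: meval_esym_exponent_le].
Qed.

Definition negopt (a : option R) : option R :=
  match a with Some r => Some (Ropp r) | None => None end.

Lemma negoptK : involutive negopt.
Proof. by case=> [a|] //=; rewrite Ropp_involutive. Qed.

Lemma negopt_max a b : negopt (rmax_add a b) = rmin_add (negopt a) (negopt b).
Proof.
case: a => [a|]; case: b => [b|] //=; rewrite /Rmax /Rmin.
by case: Rle_dec => ?; case: Rle_dec => ? //; congr Some; lra.
Qed.

Lemma negopt_min a b : negopt (rmin_add a b) = rmax_add (negopt a) (negopt b).
Proof. by rewrite -[RHS]negoptK negopt_max !negoptK. Qed.

Lemma negopt_plus a b : negopt (ext_plus a b) = ext_plus (negopt a) (negopt b).
Proof. by case: a => [a|]; case: b => [b|] //=; congr Some; lra. Qed.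

Lemma negopt0 : negopt (Some R0) = Some R0.
Proof. by rewrite /= Ropp_0. Qed.

Theorem fully_elementary_Rmax : fully_elementary Rmax_sr.
Proof.
apply: (@fully_elementary_retract Rmin_sr Rmax_sr negopt negopt) => //;
  by [exact: negopt_min | exact: negopt_max | exact: negopt_plus | exact: negopt0
     | exact: negoptK | exact: fully_elementary_Rmin].
Qed.

(** * The symmetrization of R_min *)

(* (a, b) ~ (a, +oo) when a < b: an unbalanced pair is represented by its smaller entry. *)
Definition sym_nf (u : option R * option R) : option R * option R :=
  if ~~ ole u.2 u.1 then (u.1, None) else if ~~ ole u.1 u.2 then (None, u.2) else u.

Ltac sym_cases :=
  repeat match goal with a : option R |- _ => destruct a end;
  unfold sym_nf, ole, sym_add, sym_mul in *;
  cbn [sadd smul Rmin_sr car] in *;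
  unfold rmin_add, ext_plus, Rmin in *; simpl in *;
  repeat (match goal with
    | |- context [Rle_dec ?a ?b] => destruct (Rle_dec a b)
    | H : context [Rle_dec ?a ?b] |- _ => destruct (Rle_dec a b)
    end; simpl in * );
  repeat match goal with
    | H : Some _ = Some _ |- _ => injection H; clear H; intro
    | H : (_, _) = (_, _) |- _ => injection H; clear H; intros
    | H : Some ?x <> Some ?y |- _ =>
        let E := fresh in assert (E : x <> y) by congruence; clear H;
        destruct (Rtotal_order x y) as [?|[?|?]]; [|exfalso; exact (E ltac:(assumption))|]; clear E
    end;
  simpl in *; try discriminate;
  try solve [ congruence | exfalso; lra |
    (repeat match goal with |- (_, _) = (_, _) => f_equal | |- Some _ = Some _ => f_equal end);
    (reflexivity || lra) ].

Lemma sim_sym_nf (a b : option R * option R) : @sim Rmin_sr a b -> sym_nf a = sym_nf b.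
Proof. case=> [->//|]; case: a => [a1 a2]; case: b => [b1 b2] /= [a12 [b12 ab]]; sym_cases. Qed.

Notation SA := (@sym_add Rmin_sr).
Notation SM := (@sym_mul Rmin_sr).

Lemma sym_nf_addl (u v : option R * option R) : sym_nf (SA (sym_nf u) v) = sym_nf (SA u v).
Proof. case: u => [u1 u2]; case: v => [v1 v2]; sym_cases. Qed.
Lemma sym_nf_addr (u v : option R * option R) : sym_nf (SA u (sym_nf v)) = sym_nf (SA u v).
Proof. case: u => [u1 u2]; case: v => [v1 v2]; sym_cases. Qed.
Lemma sym_nf_mull (u v : option R * option R) : sym_nf (SM (sym_nf u) v) = sym_nf (SM u v).
Proof. case: u => [u1 u2]; case: v => [v1 v2]; sym_cases. Qed.
Lemma sym_nf_mulr (u v : option R * option R) : sym_nf (SM u (sym_nf v)) = sym_nf (SM u v).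
Proof. case: u => [u1 u2]; case: v => [v1 v2]; sym_cases. Qed.

(* S(R_min)/~ with each class represented by its normal form. *)
Definition SRmin : srops :=
  @SROps (option R * option R) (fun u v => sym_nf (SA u v)) (fun u v => sym_nf (SM u v))
    (None, None) (Some R0, None).

Section QuotientMorphism.

Variables (X : srops) (g : X * X -> option R * option R).
Hypotheses (g_add : forall a b, g (sym_add a b) = SA (g a) (g b))
  (g_mul : forall a b, g (sym_mul a b) = SM (g a) (g b))
  (g_zero : g (szero X, szero X) = szero SRmin)
  (g_one : g (sone X, szero X) = sone SRmin)
  (g_sim : forall a b, sim a b -> sym_nf (g a) = sym_nf (g b)).

Definition quot_morph (C : Stilde X) : SRmin := sym_nf (g (rep C)).

Lemma sim_rep_cls z : sim z (rep (cls (@sim X) z)).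
Proof.
by rewrite /rep /=; case: constructive_indefinite_description => w /= ->; left.
Qed.

Lemma quot_morph_cls z : quot_morph (cls (@sim X) z) = sym_nf (g z).
Proof. by rewrite /quot_morph (g_sim (sim_rep_cls z)). Qed.

Lemma quot_morph_add C D :
  quot_morph (@sadd (Stilde X) C D) = @sadd SRmin (quot_morph C) (quot_morph D).
Proof. by rewrite /= quot_morph_cls g_add /quot_morph sym_nf_addl sym_nf_addr. Qed.

Lemma quot_morph_mul C D :
  quot_morph (@smul (Stilde X) C D) = @smul SRmin (quot_morph C) (quot_morph D).
Proof. by rewrite /= quot_morph_cls g_mul /quot_morph sym_nf_mull sym_nf_mulr. Qed.

Lemma quot_morph_zero : quot_morph (szero (Stilde X)) = szero SRmin.
Proof. by rewrite /= quot_morph_cls g_zero. Qed.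

Lemma quot_morph_one : quot_morph (sone (Stilde X)) = sone SRmin.
Proof. by rewrite /= quot_morph_cls g_one. Qed.

End QuotientMorphism.

(* The elements 0, 1, -1 and 1* = (0, 0) of SRmin; they form a subsemiring. *)
Inductive sign := Zero | Pos | Neg | Bal.

Definition sign_add (a b : sign) : sign :=
  match a, b with
  | Zero, c | c, Zero => c
  | Pos, Pos => Pos
  | Neg, Neg => Neg
  | _, _ => Bal
  end.

Definition sign_mul (a b : sign) : sign :=
  match a, b with
  | Zero, _ | _, Zero => Zero
  | Pos, c | c, Pos => c
  | Neg, Neg => Pos
  | _, _ => Bal
  end.

Definition sign_val (a : sign) : SRmin :=
  match a with
  | Zero => (None, None)
  | Pos => (Some R0, None)
  | Neg => (None, Some R0)
  | Bal => (Some R0, Some R0)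
  end.

Lemma sign_val_add a b : sadd (sign_val a) (sign_val b) = sign_val (sign_add a b).
Proof. by case: a; case: b; cbn [sadd SRmin sign_val sign_add]; sym_cases. Qed.

Lemma sign_val_mul a b : smul (sign_val a) (sign_val b) = sign_val (sign_mul a b).
Proof. by case: a; case: b; cbn [smul SRmin sign_val sign_mul]; sym_cases. Qed.

Definition sign_pow (a : sign) (k : nat) : sign := iter k (sign_mul a) Pos.

Lemma spow_sign_val a k : spow (sign_val a) k = sign_val (sign_pow a k).
Proof.
elim: k => [|k IH] //.
by rewrite -[spow _ _]/(smul (sign_val a) (spow (sign_val a) k)) IH sign_val_mul.
Qed.

Lemma sign_pow_Pos k : sign_pow Pos k = Pos.
Proof. by elim: k => //= k ->. Qed.

Lemma sign_pow_Bal k : sign_pow Bal k.+1 = Bal.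
Proof. by elim: k => //= k ->. Qed.

(** * The symmetrizations are not fully elementary *)

Definition vec2 (T : Type) (a b : T) : 'I_2 -> T := fun i => if i == ord0 then a else b.

Lemma vec2_eta (T : Type) (f : 'I_2 -> T) : f = vec2 (f ord0) (f ord_max).
Proof.
apply: functional_extensionality => i; rewrite /vec2.
case: eqP => [-> //|ne]; congr f; apply: val_inj.
by case: i ne => [[|[|m]] im] //= ne; case: ne; apply: val_inj.
Qed.

Lemma meval_vec2 (X : srops) d (a b : X) :
  meval d (vec2 a b) = smul (spow a (d ord0)) (smul (spow b (d ord_max)) (sone X)).
Proof.
rewrite /meval enum_ordSl enum_ordSl enum_ord0 /=.
by rewrite (_ : lift ord0 ord0 = ord_max) //; apply: val_inj.
Qed.

Lemma meval_sign_vec2 d a b :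
  meval d (vec2 (sign_val a) (sign_val b)) =
  sign_val (sign_mul (sign_pow a (d ord0)) (sign_pow b (d ord_max))).
Proof.
rewrite meval_vec2 !spow_sign_val -[sone _]/(sign_val Pos) !sign_val_mul.
by case: (sign_pow b _); case: (sign_pow a _).
Qed.

Lemma peval_esym_perm (X : srops) n k (s : seq {set 'I_n}) (x : 'I_n -> X) :
  (forall a b c : X, sadd a (sadd b c) = sadd b (sadd a c)) ->
  perm_eq (enum [set A : {set 'I_n} | #|A| == k]) s ->
  peval (esym_expr X n k) x =
  foldr (fun A acc => sadd (smul (sone X) (meval (indicator A) x)) acc) (szero X) s.
Proof. by move=> addCA; rewrite /peval /esym_expr foldr_map; apply: foldr_perm. Qed.

Lemma SRmin_addCA (a b c : SRmin) : sadd a (sadd b c) = sadd b (sadd a c).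
Proof.
rewrite /= sym_nf_addr sym_nf_addr; congr sym_nf.
by case: a => a1 a2; case: b => b1 b2; case: c => c1 c2;
  rewrite /sym_add /= Monoid.mulmCA [rmin_add a2 _]Monoid.mulmCA.
Qed.

Lemma perm_enum_card1_I2 :
  perm_eq (enum [set A : {set 'I_2} | #|A| == 1]) [:: [set ord0]; [set ord_max]].
Proof.
apply: uniq_perm; first exact: enum_uniq.
  by rewrite /= inE andbT; apply/negP => /eqP /set1_inj.
move=> A; rewrite mem_enum !inE; apply/cards1P/orP => [[a ->]|].
  by case: a => [[|[|m]] am] //; [left | right]; apply/eqP/congr1/val_inj.
by case=> /eqP ->; eexists.
Qed.

Lemma perm_enum_card2_I2 : perm_eq (enum [set A : {set 'I_2} | #|A| == 2]) [:: [set: 'I_2]].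
Proof.
apply: uniq_perm; first exact: enum_uniq; first by [].
move=> A; rewrite mem_enum !inE; apply/idP/idP => [/eqP cA|/eqP ->].
  by rewrite eqEcard subsetT cardsT card_ord cA.
by rewrite cardsT card_ord.
Qed.

Lemma esym1_sign_vec2 a b :
  peval (esym_expr SRmin 2 1) (vec2 (sign_val a) (sign_val b)) = sign_val (sign_add a b).
Proof.
rewrite (peval_esym_perm _ SRmin_addCA perm_enum_card1_I2); cbn [foldr].
rewrite !meval_sign_vec2 -[sone _]/(sign_val Pos) -[szero _]/(sign_val Zero).
by rewrite !sign_val_mul !sign_val_add !ffunE !inE; case: a; case: b.
Qed.

Lemma esym2_sign_vec2 a b :
  peval (esym_expr SRmin 2 2) (vec2 (sign_val a) (sign_val b)) = sign_val (sign_mul a b).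
Proof.
rewrite (peval_esym_perm _ SRmin_addCA perm_enum_card2_I2); cbn [foldr].
rewrite !meval_sign_vec2 -[sone _]/(sign_val Pos) -[szero _]/(sign_val Zero).
by rewrite !sign_val_mul !sign_val_add !ffunE !inE; case: a; case: b.
Qed.

Lemma sym_nf_Pos u : sym_nf u = sign_val Pos -> ~~ ole u.2 (Some R0).
Proof. by case: u => a b /= E; sym_cases. Qed.

Lemma sym_nf_Bal u : sym_nf u = sign_val Bal -> ole u.2 (Some R0).
Proof. by case: u => a b /= E; sym_cases. Qed.

Lemma peval_SRmin n (r : pexpr SRmin n) y :
  peval r y = sym_nf (foldr (fun t acc => SA (SM t.1 (meval t.2 y)) acc) (None, None) r).
Proof. by rewrite /peval; elim: r => [|t r IH] //=; rewrite IH sym_nf_addr sym_nf_addl. Qed.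

Lemma snd_foldr_SA (T : Type) (F : T -> option R * option R) s :
  (foldr (fun t acc => SA (F t) acc) (None, None) s).2 =
  foldr (fun t acc => rmin_add (F t).2 acc) None s.
Proof. by elim: s => [|t s IH] //=; rewrite IH. Qed.

Lemma term_obstruction (c : SRmin) d :
  ole (SM c (meval d (vec2 (sign_val Bal) (sign_val Zero)))).2 (Some R0) ->
  ole (SM c (meval d (vec2 (sign_val Pos) (sign_val Zero)))).2 (Some R0) ||
  ole (SM c (meval d (vec2 (sign_val Bal) (sign_val Neg)))).2 (Some R0).
Proof.
rewrite !meval_sign_vec2 sign_pow_Pos.
case: (d ord0) => [|k0]; case: (d ord_max) => [|k1]; rewrite ?sign_pow_Bal /=.
- by move->.
- by case: c => [[c1|] [c2|]].
- by move->; rewrite orbT.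
- by case: c => [[c1|] [c2|]].
Qed.

Lemma SRmin_obstruction (r : pexpr SRmin 2) :
  peval r (vec2 (sign_val Pos) (sign_val Zero)) = sign_val Pos ->
  peval r (vec2 (sign_val Bal) (sign_val Zero)) = sign_val Bal ->
  peval r (vec2 (sign_val Bal) (sign_val Neg)) = sign_val Pos -> False.
Proof.
rewrite !peval_SRmin => /sym_nf_Pos + /sym_nf_Bal + /sym_nf_Pos.
rewrite !snd_foldr_SA => noP /foldr_rmin_ole [t rt /term_obstruction /orP [tP | tBN]] noBN.
- by move: noP; rewrite (ole_trans (foldr_rmin_le _ rt) tP).
- by move: noBN; rewrite (ole_trans (foldr_rmin_le _ rt) tBN).
Qed.

Definition square (j : 'I_2) : {ffun 'I_2 -> nat} := [ffun i => if i == j then 2 else 0].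

Definition sum_squares (X : srops) : pexpr X 2 := [seq (sone X, square j) | j <- enum 'I_2].

Lemma sum_squares_sym X : sym_expr (sum_squares X).
Proof.
move=> t s /List.in_map_iff [j [<- _]] /=.
have -> : [ffun i => square j (s i)] = square (s^-1 j)%g.
  by apply/ffunP => i; rewrite !ffunE -{1}(permKV s j) (inj_eq (@perm_inj _ s)).
by apply: List.in_map; apply/In_mem; rewrite mem_enum.
Qed.

Lemma peval_sum_squares_sign a b :
  peval (sum_squares SRmin) (vec2 (sign_val a) (sign_val b)) =
  sign_val (sign_add (sign_mul a a) (sign_mul b b)).
Proof.
rewrite /sum_squares enum_ordSl enum_ordSl enum_ord0 /peval; cbn [map foldr fst snd].
rewrite !meval_sign_vec2 !ffunE -[sone _]/(sign_val Pos) -[szero _]/(sign_val Zero).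
by rewrite !sign_val_mul !sign_val_add; case: a; case: b.
Qed.

Lemma not_fully_elementary_of_morph (Y : srops) (h : Y -> SRmin) (yn yb : Y) :
  (forall a b, h (sadd a b) = sadd (h a) (h b)) ->
  (forall a b, h (smul a b) = smul (h a) (h b)) ->
  h (szero Y) = szero SRmin -> h (sone Y) = sone SRmin ->
  h yn = sign_val Neg -> h yb = sign_val Bal -> ~ fully_elementary Y.
Proof.
move=> h_add h_mul h_zero h_one h_yn h_yb Y_fe.
have [r Hr] := Y_fe 2 _ (@sum_squares_sym Y).
have map_sq : map_pexpr h (sum_squares Y) = sum_squares SRmin.
  by rewrite /map_pexpr -map_comp; apply: eq_map => j /=; rewrite h_one.
have r_sign (a b : Y) (sa sb : sign) : h a = sign_val sa -> h b = sign_val sb ->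
    peval (map_pexpr h r) (vec2 (sign_val (sign_add sa sb)) (sign_val (sign_mul sa sb))) =
    sign_val (sign_add (sign_mul sa sa) (sign_mul sb sb)).
  move=> ha hb; have := congr1 h (Hr (vec2 a b)).
  rewrite peval_morph // peval_esym_morph // map_sq [h \o _]vec2_eta /= ha hb.
  rewrite peval_sum_squares_sign => ->.
  by apply: congr1; rewrite [RHS]vec2_eta /= esym1_sign_vec2 esym2_sign_vec2.
exact: (SRmin_obstruction (r_sign _ _ Pos Zero h_one h_zero)
  (r_sign _ _ Bal Zero h_yb h_zero) (r_sign _ _ Pos Neg h_one h_yn)).
Qed.

Lemma sym_nf_sign a : sym_nf (sign_val a) = sign_val a.
Proof. by case: a; cbn [sign_val]; sym_cases. Qed.

Theorem not_fully_elementary_Stilde_Rmin : ~ fully_elementary (Stilde Rmin_sr).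
Proof.
pose g (u : Rmin_sr * Rmin_sr) : option R * option R := u.
have g_sim a b : sim a b -> sym_nf (g a) = sym_nf (g b) by apply: sim_sym_nf.
apply: (@not_fully_elementary_of_morph _ (quot_morph g)
  (cls (@sim Rmin_sr) (sign_val Neg)) (cls (@sim Rmin_sr) (sign_val Bal))).
- exact: quot_morph_add.
- exact: quot_morph_mul.
- exact: quot_morph_zero.
- exact: quot_morph_one.
- by rewrite quot_morph_cls // sym_nf_sign.
- by rewrite quot_morph_cls // sym_nf_sign.
Qed.

Definition negpair (u : option R * option R) : option R * option R :=
  (negopt u.1, negopt u.2).

Theorem not_fully_elementary_Stilde_Rmax : ~ fully_elementary (Stilde Rmax_sr).
Proof.
pose g (u : Rmax_sr * Rmax_sr) := negpair u.
have g_add a b : g (sym_add a b) = SA (g a) (g b).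
  by case: a b => [a1 a2] [b1 b2]; rewrite /g /negpair /sym_add /= !negopt_max.
have g_mul a b : g (sym_mul a b) = SM (g a) (g b).
  by case: a b => [a1 a2] [b1 b2]; rewrite /g /negpair /sym_mul /= !negopt_max !negopt_plus.
have g_one : g (sone Rmax_sr, szero Rmax_sr) = sone SRmin by rewrite /g /negpair /= Ropp_0.
have g_sim a b : sim a b -> sym_nf (g a) = sym_nf (g b).
  case=> [-> // | [a12 [b12 ab]]]; apply: sim_sym_nf; right.
  split; first by move/(can_inj negoptK).
  split; first by move/(can_inj negoptK).
  by rewrite /= -!negopt_max; congr negopt; exact: ab.
have neg_sign a : g (sign_val a) = sign_val a by case: a; rewrite /g /negpair /= ?Ropp_0.
apply: (@not_fully_elementary_of_morph _ (quot_morph g)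
  (cls (@sim Rmax_sr) (sign_val Neg)) (cls (@sim Rmax_sr) (sign_val Bal))).
- exact: quot_morph_add.
- exact: quot_morph_mul.
- exact: quot_morph_zero.
- exact: quot_morph_one.
- by rewrite quot_morph_cls // neg_sign sym_nf_sign.
- by rewrite quot_morph_cls // neg_sign sym_nf_sign.
Qed.

Theorem theorem7p1 :
  fully_elementary Rmin_sr /\ fully_elementary Rmax_sr /\
  ~ fully_elementary (Stilde Rmin_sr) /\ ~ fully_elementary (Stilde Rmax_sr).
Proof.
split; first exact: fully_elementary_Rmin.
split; first exact: fully_elementary_Rmax.
split; [exact: not_fully_elementary_Stilde_Rmin | exact: not_fully_elementary_Stilde_Rmax].
Qed.
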